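(* Let $p$ be a prime, $a_1,a_2,a_3\in\mathbb{F}_p$, $s=3+a_1+a_2+a_3$, and let $x\in\mathbb{F}_p^3$ be a solution of \[ x_1^2+x_2^2+x_3^2+a_1x_2x_3+a_2x_1x_3+a_3x_1x_2 = s\,x_1x_2x_3. \] For $k=1,2,3$ let $m_k$ replace $x_k$ by $-x_k + s x_{k-1}x_{k+1} - a_{k+1}x_{k-1} - a_{k-1}x_{k+1}$ (indices modulo $3$), leaving the other coordinates unchanged. If, for some index $i$, $m_{i-1}x = m_{i+1}x = x$, then \[ x_i^2\,(u^2-4)\,(u^2 + a_{i-1}a_{i+1}u + a_{i-1}^2 + a_{i+1}^2 - 4) = 0, \] where $u = s x_i - a_i$. *)

From mathcomp Require Import all_boot all_algebra.

Set Implicit Arguments. Unset Strict Implicit. Unset Printing Implicit Defensive.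
Import GRing.Theory.
Local Open Scope ring_scope.

(* Indices 1,2,3 of the paper are represented by 0,1,2 : 'I_3;
   index arithmetic is modulo 3. *)
Definition inext (k : 'I_3) : 'I_3 := inZp (k.+1).
Definition iprev (k : 'I_3) : 'I_3 := inZp (k.+2).

Definition s_of (p : nat) (a : 'I_3 -> 'F_p) : 'F_p := 3%:R + \sum_(k < 3) a k.

Definition on_surface (p : nat) (a x : 'I_3 -> 'F_p) : Prop :=
  \sum_(k < 3) (x k ^+ 2 + a k * x (iprev k) * x (inext k))
  = s_of a * x 0 * x 1 * x 2.

Definition m_inv (p : nat) (a : 'I_3 -> 'F_p) (k : 'I_3) (x : 'I_3 -> 'F_p)
  : 'I_3 -> 'F_p :=
  fun j => if j == k then
             - x k + s_of a * x (iprev k) * x (inext k)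
             - a (inext k) * x (iprev k) - a (iprev k) * x (inext k)
           else x j.

(* Around the index i, write z = x_i, X = x_(i-1), Y = x_(i+1) and u = s z - a_i.
   The two fixed-point conditions are the linear system 2X = uY - a_(i+1) z,
   2Y = uX - a_(i-1) z, whose adjugate gives (4 - u^2) X and (4 - u^2) Y as
   multiples of z.  Since u absorbs the cubic term, the surface equation reads
   Q(z, X, Y) = 0 for a quadratic form Q; multiplying it by (4 - u^2)^2 and
   substituting these values turns it into
   z^2 (u^2 - 4) (u^2 + a_(i-1) a_(i+1) u + a_(i-1)^2 + a_(i+1)^2 - 4) = 0. *)

From mathcomp Require Import all_boot all_algebra ring.

Set Implicit Arguments.
Unset Strict Implicit.
Unset Printing Implicit Defensive.

Import GRing.Theory.
Local Open Scope ring_scope.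

Lemma iprevK : cancel iprev inext.
Proof. by case=> [[|[|[|?]]] ?] //; apply/val_inj. Qed.

Lemma inextK : cancel inext iprev.
Proof. by case=> [[|[|[|?]]] ?] //; apply/val_inj. Qed.

Lemma iprev2 (k : 'I_3) : iprev (iprev k) = inext k.
Proof. by case: k => [[|[|[|?]]] ?] //; apply/val_inj. Qed.

Lemma inext2 (k : 'I_3) : inext (inext k) = iprev k.
Proof. by case: k => [[|[|[|?]]] ?] //; apply/val_inj. Qed.

Lemma perm_ord3_around (i : 'I_3) :
  perm_eq [:: iprev i; i; inext i] (index_enum 'I_3).
Proof.
apply: uniq_perm; rewrite ?index_enum_uniq //; first by case: i => [[|[|[|?]]] ?].
by move=> k; rewrite mem_index_enum; case: i k => [[|[|[|?]]] ?] // [[|[|[|?]]] ?].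
Qed.

Lemma big_ord3_around (R : Type) (idx : R) (op : Monoid.com_law idx)
    (F : 'I_3 -> R) (i : 'I_3) :
  \big[op/idx]_(k < 3) F k = op (F (iprev i)) (op (F i) (F (inext i))).
Proof. by rewrite -(perm_big _ (perm_ord3_around i)) !big_cons big_nil Monoid.mulm1. Qed.

Section Algebra.

Variable R : comNzRingType.

Definition surface_form (aj ak u z X Y : R) : R :=
  z ^+ 2 + X ^+ 2 + Y ^+ 2 + aj * z * Y + ak * z * X - u * X * Y.

Lemma surface_formZ (aj ak u c z X Y : R) :
  surface_form aj ak u (c * z) (c * X) (c * Y) = c ^+ 2 * surface_form aj ak u z X Y.
Proof. by rewrite /surface_form; ring. Qed.

Lemma adjugate_solve (u b c X Y : R) :
  2%:R * X = u * Y - b -> 2%:R * Y = u * X - c ->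
  (4%:R - u ^+ 2) * X = - (u * c + 2%:R * b).
Proof.
move=> eX eY.
have -> : (4%:R - u ^+ 2) * X = 2%:R * (2%:R * X) - u * (u * X - c) - u * c by ring.
by rewrite eX -eY; ring.
Qed.

Lemma surface_form_fixed_eq0 (aj ak u z X Y : R) :
  2%:R * X = u * Y - ak * z -> 2%:R * Y = u * X - aj * z ->
  surface_form aj ak u z X Y = 0 ->
  z ^+ 2 * (u ^+ 2 - 4%:R) * (u ^+ 2 + aj * ak * u + aj ^+ 2 + ak ^+ 2 - 4%:R) = 0.
Proof.
move=> eX eY eQ.
have dX := adjugate_solve eX eY.
have dY := adjugate_solve eY eX.
transitivity (surface_form aj ak u
  ((4%:R - u ^+ 2) * z) ((4%:R - u ^+ 2) * X) ((4%:R - u ^+ 2) * Y)).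
  by rewrite dX dY /surface_form; ring.
by rewrite surface_formZ eQ mulr0.
Qed.

End Algebra.

Section Surface.

Variables (p : nat) (a x : 'I_3 -> 'F_p).

Lemma on_surface_around (i : 'I_3) : on_surface a x ->
  surface_form (a (iprev i)) (a (inext i)) (s_of a * x i - a i)
    (x i) (x (iprev i)) (x (inext i)) = 0.
Proof.
rewrite /on_surface.
have -> : s_of a * x 0 * x 1 * x 2 = s_of a * \prod_(k < 3) x k.
  rewrite !big_ord_recr big_ord0 /= mul1r !mulrA.
  by congr (_ * x _ * x _ * x _); apply/val_inj.
rewrite (big_ord3_around _ _ i) (big_ord3_around _ _ i) /=.
rewrite iprev2 inext2 iprevK inextK => /eqP; rewrite -subr_eq0 => /eqP <-.
by rewrite /surface_form; ring.
Qed.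

Lemma m_inv_fixed (k : 'I_3) : m_inv a k x = x ->
  2%:R * x k = s_of a * x (iprev k) * x (inext k)
               - a (inext k) * x (iprev k) - a (iprev k) * x (inext k).
Proof.
move=> /(congr1 (fun y => y k)); rewrite /m_inv eqxx => fix_k.
by rewrite mulr_natl mulr2n -{1}fix_k; ring.
Qed.

End Surface.

Theorem proposition2p4 (p : nat) (hp : prime p) (a x : 'I_3 -> 'F_p)
  (hx : on_surface a x) (i : 'I_3) :
  m_inv a (iprev i) x = x -> m_inv a (inext i) x = x ->
  let u := s_of a * x i - a i in
  x i ^+ 2 * (u ^+ 2 - 4%:R)
    * (u ^+ 2 + a (iprev i) * a (inext i) * u
       + a (iprev i) ^+ 2 + a (inext i) ^+ 2 - 4%:R) = 0.
Proof.
move=> /m_inv_fixed fix_prev /m_inv_fixed fix_next u.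
rewrite iprev2 iprevK in fix_prev; rewrite inextK inext2 in fix_next.
apply: surface_form_fixed_eq0 (on_surface_around i hx).
  by rewrite fix_prev /u; ring.
by rewrite fix_next /u; ring.
Qed.
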